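(* Let $G=(S,C,H)$ be a thin spider graph with weight $r\ge2$ and $T_H$ an MDNS of $G[H]$. Then: (1) $\tilde\gamma_{gr}^{\times 2}((S_f,C,H))=\tilde\gamma_{gr}^{\times 2}(G)+1=2r+1+\tilde\gamma_{gr}^{\times 2}(G[H])$ and $T_H\oplus(c_1,\dots,c_r,s_1,\dots,s_r,s'_r)$ is an MDNS of $(S_f,C,H)$; (2) if $H=\emptyset$ or $a(G[H])=1$, then $\tilde\gamma_{gr}^{\times 2}((S_t,C,H))=\tilde\gamma_{gr}^{\times 2}(G)+1=2r+1+\tilde\gamma_{gr}^{\times 2}(G[H])$ and $T_H\oplus(s_r,s'_r,c_r,c_1,\dots,c_{r-1},s_1,\dots,s_{r-1})$ is an MDNS of $(S_t,C,H)$; (3) if $H\neq\emptyset$ and $a(G[H])=0$, then $\tilde\gamma_{gr}^{\times 2}((S_t,C,H))=2r+\tilde\gamma_{gr}^{\times 2}(G[H])$ and $T_H\oplus(c_1,\dots,c_r,s_1,\dots,s_r)$ is an MDNS of $(S_t,C,H)$; (4) if $H=\emptyset$, then $\tilde\gamma_{gr}^{\times 2}((S,C_f,H))=\tilde\gamma_{gr}^{\times 2}((S,C_t,H))=\tilde\gamma_{gr}^{\times 2}(G)+1=2r+1$ and $(s_r,c_r,c'_r,c_1,\dots,c_{r-1},s_1,\dots,s_{r-1})$ is an MDNS of both $(S,C_f,H)$ and $(S,C_t,H)$; (5) if $H\neq\emptyset$, then $\tilde\gamma_{gr}^{\times 2}((S,C_f,H))=\tilde\gamma_{gr}^{\times 2}((S,C_t,H))=2r+\tilde\gamma_{gr}^{\times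 2}(G[H])$ and $T_H\oplus(c_1,\dots,c_r,s_1,\dots,s_r)$ is an MDNS of both.
   Context: Graphs are finite, simple, undirected; $N(v)$ open, $N[v]$ closed neighborhood. A sequence of distinct vertices $(v_1,\dots,v_k)$ is a double neighborhood sequence (DNS) if for each $i$ some $u\in N[v_i]$ satisfies $|\{j<i:u\in N[v_j]\}|\le 1$; an MDNS is a DNS of maximum length and $\tilde\gamma_{gr}^{\times 2}$ is that length; for the empty graph it is $0$ with the empty sequence. $\oplus$ is concatenation. $a(X)=1$ if $X$ has an isolated vertex, else $0$. A spider graph $G=(S,C,H)$: $V(G)$ is partitioned into $S=\{s_1,\dots,s_r\}$ (stable), $C=\{c_1,\dots,c_r\}$ (clique), $H$ (possibly empty), $r\ge 2$, all edges between $C$ and $H$, none between $H$ and $S$; thin means $s_ic_j\in E$ iff $i=j$. Quasi-spider graphs: $(S_f,C,H)$ (resp. $(S_t,C,H)$) is obtained from $G$ by adding a new vertex $s'_r$ that is a false twin of $s_r$, i.e. $N(s'_r)=N(s_r)$ (resp. a true twin, i.e. $N[s'_r]=N[s_r]\cup\{s'_r\}$ with $s'_r$ adjacent to $s_r$); $(S,C_f,H)$ and $(S,C_t,H)$ are obtained analogously by adding a false (resp. true) twin $c'_r$ of $c_r$. *)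

From mathcomp Require Import all_boot.
Set Implicit Arguments. Unset Strict Implicit. Unset Printing Implicit Defensive.

(* A simple graph on a finType T is a symmetric irreflexive relation adj.
   Induced subgraphs G[V] are represented by a vertex set V : {set T}. *)
Section DNS.
Variable T : finType.
Variable adj : rel T.

Definition cnbh (V : {set T}) (v : T) : {set T} :=
  [set u in V | (u == v) || adj v u].

Fixpoint dns_aux (V : {set T}) (prev rest : seq T) : bool :=
  match rest with
  | [::] => true
  | v :: rest' =>
      [exists u in cnbh V v, count (fun w => u \in cnbh V w) prev <= 1]
      && dns_aux V (rcons prev v) rest'
  end.

Definition is_DNS (V : {set T}) (s : seq T) : bool :=
  [&& uniq s, all (fun v => v \in V) s & dns_aux V [::] s].

(* gamma~_gr^{x2}(G[V]): maximum length of a DNS (0 for the empty graph) *)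
Definition gamma (V : {set T}) : nat :=
  \max_(k < #|V|.+1 | [exists t : k.-tuple T, is_DNS V t]) k.

Definition is_MDNS (V : {set T}) (s : seq T) : Prop :=
  is_DNS V s /\ size s = gamma V.

(* a(G[V]) = 1 *)
Definition has_isolated (V : {set T}) : bool :=
  [exists v in V, [forall u in V, ~~ adj v u]].

Definition thin_spider (r : nat) (s c : nat -> T) (H : {set T}) : Prop :=
  [/\ 2 <= r,
      {in [pred i | 1 <= i <= r] &, injective s},
      {in [pred i | 1 <= i <= r] &, injective c},
      (forall i j, 1 <= i <= r -> 1 <= j <= r -> s i != c j)
    & (forall x, (x \in H) = ~~ has (fun i => (x == s i) || (x == c i)) (iota 1 r))] /\
  [/\ (forall i j, 1 <= i <= r -> 1 <= j <= r -> ~~ adj (s i) (s j)),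
      (forall i j, 1 <= i <= r -> 1 <= j <= r -> i != j -> adj (c i) (c j)),
      (forall i h, 1 <= i <= r -> h \in H -> adj (c i) h && ~~ adj (s i) h)
    & (forall i j, 1 <= i <= r -> 1 <= j <= r -> adj (s i) (c j) = (i == j))].
End DNS.

(* graph on option T: None is a new vertex with (open) neighbourhood N *)
Definition ext_adj (T : finType) (adj : rel T) (N : pred T) : rel (option T) :=
  fun x y => match x, y with
  | Some a, Some b => adj a b
  | None, Some b => N b
  | Some a, None => N a
  | None, None => false
  end.

Definition add_false_twin (T : finType) (adj : rel T) (v : T) :=
  ext_adj adj (adj v).
Definition add_true_twin (T : finType) (adj : rel T) (v : T) :=
  ext_adj adj (fun b => (b == v) || adj v b).

From mathcomp Require Import all_boot zify.
Set Implicit Arguments. Unset Strict Implicit. Unset Printing Implicit Defensive.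

(* Every vertex outside H is adjacent to all of H or to none of it, so the vertices of H in a
   double neighbourhood sequence form a DNS of G[H].  Hence a DNS has at most
   |V \ H| + gamma(G[H]) vertices: 2r + gamma(G[H]) in G and 2r + 1 + gamma(G[H]) after adding
   a twin, and T_H followed by the clique and the stable vertices (suitably reordered) attains
   these bounds.  In cases (3) and (5) one more vertex is lost.  A DNS that misses one of s_r,
   c_r and the twin v' has at most 2r vertices outside H.  Otherwise, take the last vertex of
   the DNS that is one of these three or lies in H: its witness is covered at most once by the
   H-part, so the H-part extends to a longer DNS of G[H] (in case (3) because G[H] has no
   isolated vertex). *)


Lemma count_le1P (T : eqType) (P : pred T) (t : seq T) : uniq t ->
  reflect {in t &, forall y1 y2, P y1 -> P y2 -> y1 = y2} (count P t <= 1).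
Proof.
move=> ut; apply: (iffP idP) => [cP y1 y2 y1t y2t Py1 Py2 | Puniq].
  apply/eqP; apply: contraLR cP => ne; rewrite -ltnNge -size_filter.
  apply: (@uniq_leq_size _ [:: y1; y2]); first by rewrite /= inE ne.
  by move=> y; rewrite !inE mem_filter => /orP[]/eqP->; apply/andP.
case: (boolP (has P t)) => [/hasP[y0 y0t Py0] | /hasPn noP]; last first.
  suff -> : count P t = 0 by [].
  by apply/eqP; rewrite eqn0Ngt -has_count; apply/hasPn.
rewrite -size_filter (@uniq_leq_size _ _ [:: y0]) ?filter_uniq //.
by move=> y; rewrite mem_filter inE => /andP[Py yt]; rewrite (Puniq y y0).
Qed.

Section DoubleNeighbourhoodSequences.
Variables (U : finType) (e : rel U).

Definition dns_next (V : {set U}) (p : seq U) (v : U) :=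
  [exists u in cnbh e V v, count (fun w => u \in cnbh e V w) p <= 1].

Lemma in_cnbhT u w : (u \in cnbh e setT w) = (u == w) || e w u.
Proof. by rewrite inE in_setT. Qed.

Lemma dns_aux_cat V p a b :
  dns_aux e V p (a ++ b) = dns_aux e V p a && dns_aux e V (p ++ a) b.
Proof. by elim: a p => [|x a IH] p /=; rewrite ?cats0 // IH cat_rcons andbA. Qed.

Lemma is_DNS_rcons V p v : is_DNS e V (rcons p v) =
  [&& is_DNS e V p, v \notin p, v \in V & dns_next V p v].
Proof.
rewrite /is_DNS rcons_uniq all_rcons -cats1 dns_aux_cat /= andbT /dns_next.
by case: (v \notin p); case: (uniq p); case: (v \in V); case: (all _ p);
  case: (dns_aux _ _ _ p).
Qed.

Lemma dns_rcons V p v : is_DNS e V p -> v \notin p -> v \in V -> dns_next V p v ->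
  is_DNS e V (rcons p v).
Proof. by move=> *; rewrite is_DNS_rcons; apply/and4P. Qed.

Lemma dns_uniq V t : is_DNS e V t -> uniq t.
Proof. by case/and3P. Qed.

Lemma dns_next_of_witness V p v u y0 : uniq p -> u \in cnbh e V v ->
  {in p, forall y, u \in cnbh e V y -> y = y0} -> dns_next V p v.
Proof.
move=> up uv covers; apply/exists_inP; exists u => //.
by apply/count_le1P => // y1 y2 y1p y2p /(covers _ y1p)-> /(covers _ y2p)->.
Qed.

Lemma dns_next_size1 (V : {set U}) p v : size p <= 1 -> v \in V -> dns_next V p v.
Proof.
move=> p1 vV; apply/exists_inP; exists v; last exact: leq_trans (count_size _ _) p1.
by rewrite inE vV eqxx.
Qed.

Lemma dns_witness V t z : is_DNS e V t -> z \in t ->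
  exists2 u, u \in cnbh e V z &
    {in take (index z t) t &, forall y1 y2,
       u \in cnbh e V y1 -> u \in cnbh e V y2 -> y1 = y2}.
Proof.
move=> /[dup] /dns_uniq ut /and3P[_ _ D] zt.
have tE : t = take (index z t) t ++ z :: drop (index z t).+1 t.
  by rewrite -{1}(cat_take_drop (index z t) t) (drop_nth z) ?index_mem ?nth_index.
move: D; rewrite {1}tE dns_aux_cat /= => /and3P[_ /exists_inP[u uz cu] _].
by exists u => //; apply/count_le1P: cu; rewrite (take_uniq _ ut).
Qed.

Lemma dns_cat_map V p (F : nat -> U) n : is_DNS e V p ->
  (forall k, 1 <= k <= n -> is_DNS e V (p ++ map F (iota 1 k.-1)) ->
     [&& F k \notin p ++ map F (iota 1 k.-1), F k \in V &
         dns_next V (p ++ map F (iota 1 k.-1)) (F k)]) ->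
  is_DNS e V (p ++ map F (iota 1 n)).
Proof.
move=> Dp; elim: n => [|n IH] next; first by rewrite cats0.
have Dn : is_DNS e V (p ++ map F (iota 1 n)).
  by apply: IH => k /andP[k1 kn]; apply: next; rewrite k1 ltnW.
rewrite -[n.+1]addn1 iotaD map_cat catA cats1 add1n.
by rewrite is_DNS_rcons Dn /=; apply: next; rewrite ?leqnn.
Qed.

Lemma dns_last_witness V t (A : pred U) : is_DNS e V t -> has A t ->
  exists z u, [/\ z \in t, A z, u \in cnbh e V z &
    {in [pred y | [&& y \in t, A y & y != z]] &, forall y1 y2,
       u \in cnbh e V y1 -> u \in cnbh e V y2 -> y1 = y2}].
Proof.
move=> D /hasP[y0 y0t Ay0].
case: (@arg_maxnP _ y0 [pred y | (y \in t) && A y] (index^~ t)).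
  by rewrite /= y0t.
move=> z /andP[zt Az] zlast.
have [u uz covers] := dns_witness D zt.
exists z, u; split=> // y1 y2 /and3P[y1t Ay1 y1z] /and3P[y2t Ay2 y2z].
have before y : y \in t -> A y -> y != z -> y \in take (index z t) t.
  move=> yt Ay yz; have /= := zlast y; rewrite yt Ay => /(_ isT) yz_le.
  rewrite in_take // ltn_neqAle yz_le andbT.
  by apply: contra yz => /eqP/(index_inj y yt zt) ->.
exact: covers (before _ _ _ _) (before _ _ _ _).
Qed.

Lemma leq_gamma V t : is_DNS e V t -> size t <= gamma e V.
Proof.
move=> /[dup] D /and3P[ut /allP tV _].
have tV' : size t < #|V|.+1.
  by rewrite ltnS -(card_uniqP ut); apply/subset_leq_card/subsetP.
apply: (@leq_bigmax_cond _ _ _ (Ordinal tV')).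
by apply/existsP; exists (in_tuple t).
Qed.

Lemma gamma_leq V n : (forall t, is_DNS e V t -> size t <= n) -> gamma e V <= n.
Proof.
by move=> bound; apply/bigmax_leqP => k /existsP[t /bound]; rewrite size_tuple.
Qed.

Lemma MDNS_gamma_leq V t : is_DNS e V t -> gamma e V <= size t -> is_MDNS e V t.
Proof. by move=> D le; split=> //; apply/eqP; rewrite eqn_leq le leq_gamma. Qed.

Lemma gamma_set0 : gamma e set0 = 0.
Proof.
apply/eqP; rewrite -leqn0; apply: gamma_leq => -[|y t] // /and3P[_ /andP[]].
by rewrite inE.
Qed.

End DoubleNeighbourhoodSequences.

Lemma mem_Some_imset (T : finType) (A : {set T}) x : (Some x \in Some @: A) = (x \in A).
Proof. exact: mem_imset (@Some_inj _). Qed.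

Lemma None_notin_imset (T : finType) (A : {set T}) : None \notin Some @: A.
Proof. by apply/imsetP => -[]. Qed.

Section ModuleRestriction.
Variables (U T : finType) (e : rel U) (a : rel T) (f : T -> U) (H : {set T}).
Hypotheses (f_inj : injective f) (e_sym : symmetric e)
  (e_f : forall x y, e (f x) (f y) = a x y)
  (f_module : forall y h h', y \notin f @: H -> h \in H -> h' \in H ->
     e y (f h) -> e y (f h')).

Lemma cnbh_f w y : w \in H -> (f w \in cnbh e setT (f y)) = (w \in cnbh a H y).
Proof. by move=> wH; rewrite in_cnbhT inE wH (inj_eq f_inj) e_f. Qed.

Lemma dns_embed A : is_DNS a H A -> is_DNS e setT (map f A).
Proof.
elim/last_ind: A => [|A x IH] //.
rewrite is_DNS_rcons map_rcons => /and4P[DA xA xH /exists_inP[u ux cu]].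
have uH : u \in H by move: ux; rewrite inE => /andP[].
rewrite is_DNS_rcons IH // mem_map // xA in_setT; apply/exists_inP; exists (f u).
  by rewrite cnbh_f.
by rewrite count_map (eq_count (a2 := fun w => u \in cnbh a H w)) // => y; exact: cnbh_f.
Qed.

Lemma count_restrict s A (P : pred U) : map f A = filter (mem (f @: H)) s ->
  count (fun x => P (f x)) A = count (fun y => (y \in f @: H) && P y) s.
Proof.
move=> EA; rewrite -(count_map f P) EA count_filter.
by apply: eq_count => y; rewrite /= andbC.
Qed.

Lemma dns_restrict_module s : is_DNS e setT s ->
  exists2 A, map f A = filter (mem (f @: H)) s & is_DNS a H A.
Proof.
elim/last_ind: s => [|p v IH]; first by exists [::].
rewrite is_DNS_rcons => /and4P[Dp vp _ /exists_inP[u uv cu]].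
have [A EA DA] := IH Dp; rewrite filter_rcons.
case: ifP => /= vH; last by exists A.
have [x xH vE] := imsetP vH; subst v.
exists (rcons A x); first by rewrite map_rcons EA.
have xA : x \notin A.
  by apply: contra vp => /(map_f f); rewrite EA mem_filter => /andP[].
rewrite is_DNS_rcons DA xA xH /=; apply/exists_inP.
have [_ /allP AH _] := and3P DA.
case: (boolP (u \in f @: H)) => [/imsetP[h hH uE] | uH].
  subst u; exists h; first by rewrite -cnbh_f.
  apply: leq_trans cu; rewrite -(eq_in_count (a1 := fun y => f h \in cnbh e setT (f y))).
    by rewrite (count_restrict (fun y => f h \in cnbh e setT y) EA) sub_count // => y /andP[].
  by move=> y /AH yH /=; rewrite cnbh_f.
exists x; first by rewrite inE xH eqxx.
apply: leq_trans cu; apply: leq_trans (count_size _ A) _.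
rewrite -(size_map f) EA size_filter; apply: sub_count => _ /imsetP[y yH ->].
have ux : e u (f x) by move: uv; rewrite in_cnbhT e_sym => /orP[/eqP uE|//]; rewrite uE vH in uH.
by rewrite in_cnbhT e_sym (f_module uH xH yH ux) orbT.
Qed.

Variable L : seq U.
Hypothesis L_cover : forall y, y \notin f @: H -> y \in L.

Lemma count_outside_module s : uniq s -> count [predC f @: H] s <= size L.
Proof.
move=> us; rewrite -size_filter uniq_leq_size ?filter_uniq // => y.
by rewrite mem_filter => /andP[/L_cover].
Qed.

Lemma dns_size_module s : is_DNS e setT s -> size s <= size L + gamma a H.
Proof.
move=> D; have [A EA DA] := dns_restrict_module D.
rewrite -(count_predC (mem (f @: H))) -size_filter -EA size_map addnC.
by rewrite leq_add ?leq_gamma ?count_outside_module ?(dns_uniq D).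
Qed.

Lemma dns_size_module_miss s x : is_DNS e setT s -> x \notin f @: H -> x \notin s ->
  size s < size L + gamma a H.
Proof.
move=> D xH xs; have [A EA DA] := dns_restrict_module D.
rewrite -(count_predC (mem (f @: H))) -size_filter -EA size_map addnC -addSn.
rewrite leq_add ?leq_gamma //.
by have := @count_outside_module (x :: s); rewrite /= xs (dns_uniq D) xH; apply.
Qed.

Lemma dns_size_module_extend s x w : is_DNS e setT s -> x \in H -> f x \notin s ->
  w \in cnbh a H x -> count (fun y => (y \in f @: H) && (f w \in cnbh e setT y)) s <= 1 ->
  size s < size L + gamma a H.
Proof.
move=> D xH xs wx cw; have [A EA DA] := dns_restrict_module D.
rewrite -(count_predC (mem (f @: H))) -size_filter -EA size_map addnC -addnS.
rewrite leq_add ?count_outside_module ?(dns_uniq D) // -(size_rcons A x) leq_gamma //.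
have xA : x \notin A.
  by apply: contra xs => /(map_f f); rewrite EA mem_filter => /andP[].
have [_ /allP AH _] := and3P DA.
have wH : w \in H by move: wx; rewrite inE => /andP[].
rewrite is_DNS_rcons DA xA xH; apply/exists_inP; exists w => //.
rewrite -(count_restrict _ EA) in cw; apply: leq_trans cw.
by rewrite leq_eqVlt; apply/orP; left; apply/eqP/eq_in_count => y /AH yH /=; rewrite cnbh_f.
Qed.

End ModuleRestriction.

Section ThinSpider.
Variables (T : finType) (adj : rel T) (r : nat) (s c : nat -> T) (H : {set T}).
Hypotheses (adj_sym : symmetric adj) (adj_irr : irreflexive adj)
  (spider : thin_spider adj r s c H).

Let r_gt1 : 1 < r. Proof. by case: spider => -[]. Qed.

Let r_index : 1 <= r <= r.
Proof. by rewrite leqnn ltnW. Qed.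

Lemma s_eq i j : 1 <= i <= r -> 1 <= j <= r -> (s i == s j) = (i == j).
Proof.
case: spider => -[_ s_inj _ _ _] _ ir jr.
by apply/eqP/eqP => [/s_inj|->] //; apply.
Qed.

Lemma c_eq i j : 1 <= i <= r -> 1 <= j <= r -> (c i == c j) = (i == j).
Proof.
case: spider => -[_ _ c_inj _ _] _ ir jr.
by apply/eqP/eqP => [/c_inj|->] //; apply.
Qed.

Lemma s_eq_c i j : 1 <= i <= r -> 1 <= j <= r -> (s i == c j) = false.
Proof. by case: spider => -[_ _ _ s_neq_c _] _ ir jr; apply/negbTE/s_neq_c. Qed.

Lemma c_eq_s i j : 1 <= i <= r -> 1 <= j <= r -> (c j == s i) = false.
Proof. by move=> ir jr; rewrite eq_sym s_eq_c. Qed.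

Let memH x : (x \in H) = ~~ has (fun i => (x == s i) || (x == c i)) (iota 1 r).
Proof. by case: spider => -[]. Qed.

Lemma s_notin_H i : 1 <= i <= r -> (s i \in H) = false.
Proof.
move=> ir; rewrite memH; apply/negbF/hasP; exists i; last by rewrite eqxx.
by rewrite mem_iota add1n ltnS.
Qed.

Lemma c_notin_H i : 1 <= i <= r -> (c i \in H) = false.
Proof.
move=> ir; rewrite memH; apply/negbF/hasP; exists i; last by rewrite eqxx orbT.
by rewrite mem_iota add1n ltnS.
Qed.

Variant spider_vertex_spec : T -> Prop :=
  | VertexS i of 1 <= i <= r : spider_vertex_spec (s i)
  | VertexC i of 1 <= i <= r : spider_vertex_spec (c i)
  | VertexH h of h \in H : spider_vertex_spec h.

Lemma spider_vertexP x : spider_vertex_spec x.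
Proof.
case: (boolP (x \in H)) => [|]; first exact: VertexH.
rewrite memH negbK => /hasP[i]; rewrite mem_iota add1n ltnS => ir.
by case/orP=> /eqP->; [apply: VertexS | apply: VertexC].
Qed.

Lemma s_eq_H i h : 1 <= i <= r -> h \in H -> (s i == h) = false.
Proof. by move=> ir hH; apply: contraTF hH => /eqP<-; rewrite s_notin_H. Qed.

Lemma H_eq_s i h : 1 <= i <= r -> h \in H -> (h == s i) = false.
Proof. by move=> ir hH; rewrite eq_sym s_eq_H. Qed.

Lemma c_eq_H i h : 1 <= i <= r -> h \in H -> (c i == h) = false.
Proof. by move=> ir hH; apply: contraTF hH => /eqP<-; rewrite c_notin_H. Qed.

Lemma H_eq_c i h : 1 <= i <= r -> h \in H -> (h == c i) = false.
Proof. by move=> ir hH; rewrite eq_sym c_eq_H. Qed.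

Lemma adj_ss i j : 1 <= i <= r -> 1 <= j <= r -> adj (s i) (s j) = false.
Proof. by case: spider => _ [s_stable _ _ _] ir jr; apply/negbTE/s_stable. Qed.

Lemma adj_cc i j : 1 <= i <= r -> 1 <= j <= r -> adj (c i) (c j) = (i != j).
Proof.
case: spider => _ [_ c_clique _ _] ir jr.
by case: eqP => [->|/eqP]; [rewrite adj_irr | apply: c_clique].
Qed.

Lemma adj_sc i j : 1 <= i <= r -> 1 <= j <= r -> adj (s i) (c j) = (i == j).
Proof. by case: spider => _ [_ _ _ thin]; apply: thin. Qed.

Lemma adj_cs i j : 1 <= i <= r -> 1 <= j <= r -> adj (c j) (s i) = (i == j).
Proof. by move=> ir jr; rewrite adj_sym adj_sc. Qed.

Lemma adj_cH i h : 1 <= i <= r -> h \in H -> adj (c i) h.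
Proof. by case: spider => _ [_ _ CH _] ir /(CH _ _ ir)/andP[]. Qed.

Lemma adj_Hc i h : 1 <= i <= r -> h \in H -> adj h (c i).
Proof. by move=> ir hH; rewrite adj_sym adj_cH. Qed.

Lemma adj_sH i h : 1 <= i <= r -> h \in H -> adj (s i) h = false.
Proof. by case: spider => _ [_ _ CH _] ir /(CH _ _ ir)/andP[_ /negbTE]. Qed.

Lemma adj_Hs i h : 1 <= i <= r -> h \in H -> adj h (s i) = false.
Proof. by move=> ir hH; rewrite adj_sym adj_sH. Qed.

Section Legs.
Variables (U : finType) (e : rel U) (g : T -> U).
Hypotheses (g_inj : injective g) (e_g : forall x y, e (g x) (g y) = adj x y).

Lemma g_in_cnbh u y : (g u \in cnbh e setT (g y)) = (u == y) || adj y u.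
Proof. by rewrite in_cnbhT (inj_eq g_inj) e_g. Qed.

Lemma dns_cat_legs p m : m <= r -> is_DNS e setT p ->
  (forall k y, 1 <= k <= m -> y \in p -> (g (s k) \notin cnbh e setT y) && (y != g (c k))) ->
  is_DNS e setT (p ++ [seq g (c i) | i <- iota 1 m] ++ [seq g (s i) | i <- iota 1 m]).
Proof.
move=> mr Dp p_legs; rewrite catA.
have p_ck k : 1 <= k <= m -> g (c k) \notin p.
  by move=> km; apply/negP => /(p_legs k _ km)/andP[_]; rewrite eqxx.
have p_sk k : 1 <= k <= m -> g (s k) \notin p.
  by move=> km; apply/negP => /(p_legs k _ km)/andP[]; rewrite in_cnbhT eqxx.
apply: dns_cat_map => [|k km Dk].
  apply: dns_cat_map => // k km Dk; have kr : 1 <= k <= r by lia.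
  rewrite in_setT mem_cat negb_or p_ck //=; apply/andP; split.
    by apply/mapP => -[j]; rewrite mem_iota => jk /g_inj/eqP; rewrite c_eq //; lia.
  apply: (dns_next_of_witness (u := g (s k)) (y0 := g (c k))) (dns_uniq Dk) _ _.
    by rewrite g_in_cnbh adj_cs ?eqxx ?orbT.
  move=> y; rewrite mem_cat => /orP[/(p_legs k _ km)/andP[/negPf->] //|].
  case/mapP=> j; rewrite mem_iota => jk ->.
  by rewrite g_in_cnbh s_eq_c ?adj_cs //; try lia; move/eqP; lia.
have kr : 1 <= k <= r by lia.
rewrite in_setT !mem_cat !negb_or p_sk //= -andbA; apply/and3P; split.
- by apply/mapP => -[j]; rewrite mem_iota => jm /g_inj/eqP; rewrite s_eq_c //; lia.
- by apply/mapP => -[j]; rewrite mem_iota => jk /g_inj/eqP; rewrite s_eq //; lia.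
apply: (dns_next_of_witness (u := g (s k)) (y0 := g (c k))) (dns_uniq Dk) _ _.
  by rewrite g_in_cnbh eqxx.
move=> y; rewrite !mem_cat -orbA => /or3P[/(p_legs k _ km)/andP[/negPf->] //| |].
  case/mapP=> j; rewrite mem_iota => jm ->.
  by rewrite g_in_cnbh s_eq_c ?adj_cs //; try lia; move/eqP->.
case/mapP=> j; rewrite mem_iota => jk ->.
by rewrite g_in_cnbh s_eq ?adj_ss //; try lia; move/eqP; lia.
Qed.

Lemma dns_H_legs TH : is_DNS adj H TH ->
  is_DNS e setT (map g TH ++ [seq g (c i) | i <- iota 1 r] ++ [seq g (s i) | i <- iota 1 r]).
Proof.
move=> D; have /and3P[_ /allP TH_H _] := D.
apply: dns_cat_legs (dns_embed g_inj e_g D) _ => // k _ kr /mapP[h /TH_H hH ->].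
by rewrite g_in_cnbh (inj_eq g_inj) s_eq_H ?adj_Hs ?H_eq_c.
Qed.

End Legs.

Lemma spider_H_module y h h' : y \notin H -> h \in H -> h' \in H -> adj y h -> adj y h'.
Proof.
by case: (spider_vertexP y) => [i ir|i ir|y' ->] // _ hH h'H; rewrite ?adj_sH ?adj_cH.
Qed.

Lemma gamma_spider TH : is_MDNS adj H TH -> gamma adj setT = 2 * r + size TH.
Proof.
case=> D gH; apply/eqP; rewrite eqn_leq; apply/andP; split.
  apply: gamma_leq => t Dt.
  have := dns_size_module (f := fun x => x) (L := [seq s i | i <- iota 1 r] ++ [seq c i | i <- iota 1 r])
    (fun _ _ => id) adj_sym (fun _ _ => erefl) _ _ Dt.
  rewrite size_cat !size_map size_iota gH addnn mul2n; apply.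
    by move=> y h h'; rewrite imset_id; apply: spider_H_module.
  move=> y; rewrite imset_id => /negbTE; case: (spider_vertexP y) => [i ir|i ir|h ->] // _; rewrite mem_cat.
    by rewrite map_f ?mem_iota.
  by rewrite orbC map_f ?mem_iota.
have := leq_gamma (dns_H_legs (g := fun x => x) (fun _ _ => id) (fun _ _ => erefl) D).
by rewrite map_id !size_cat !size_map size_iota addnC addnn mul2n.
Qed.

Definition pivots : seq (option T) := [:: Some (s r); Some (c r); None].

Lemma pivotsP w : reflect [\/ w = Some (s r), w = Some (c r) | w = None] (w \in pivots).
Proof.
rewrite !inE; apply: (iffP or3P) => -[] /eqP E; by [constructor 1 | constructor 2 | constructor 3].
Qed.

Lemma pivots_outside w : w \in pivots -> w \notin Some @: H.
Proof.
case/pivotsP=> ->; last exact: None_notin_imset.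
  by rewrite mem_Some_imset s_notin_H ?r_index.
by rewrite mem_Some_imset c_notin_H ?r_index.
Qed.

Lemma pivots_others z : exists w1 w2,
  [/\ w1 \in pivots, w2 \in pivots, w1 != w2, w1 != z & w2 != z].
Proof.
have sc : Some (s r) != Some (c r) by rewrite (inj_eq (@Some_inj _)) s_eq_c ?r_index.
case: (eqVneq z (Some (s r))) => [->|zs].
  by exists (Some (c r)), None; split; rewrite // ?inE ?eqxx ?orbT // eq_sym.
case: (eqVneq z (Some (c r))) => [->|zc].
  by exists (Some (s r)), None; split; rewrite // ?inE ?eqxx ?orbT.
by exists (Some (s r)), (Some (c r)); split; rewrite // ?inE ?eqxx ?orbT // eq_sym.
Qed.

Lemma dns_Some_H TH y : is_DNS adj H TH -> y \in [seq Some x | x <- TH] -> y \in Some @: H.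
Proof. by move=> /and3P[_ /allP TH_H _] /mapP[h /TH_H hH ->]; rewrite mem_Some_imset. Qed.

Definition pivot_or_H (y : option T) := (y \in pivots) || (y \in Some @: H).

Section Extension.
Variable N : pred T.
Local Notation X := (ext_adj adj N).

Lemma ext_sym : symmetric X.
Proof. by case=> [x|] [y|] //=; rewrite adj_sym. Qed.

Lemma Some_in_cnbh u y : (Some u \in cnbh X setT (Some y)) = (u == y) || adj y u.
Proof. by rewrite in_cnbhT (inj_eq (@Some_inj _)). Qed.

Lemma None_in_cnbh y : (None \in cnbh X setT (Some y)) = N y.
Proof. by rewrite in_cnbhT. Qed.

Lemma in_cnbh_None u : (Some u \in cnbh X setT None) = N u.
Proof. by rewrite in_cnbhT. Qed.

Lemma dns_ext_legs TH : is_DNS adj H TH -> is_DNS X setT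
  (map Some TH ++ [seq Some (c i) | i <- iota 1 r] ++ [seq Some (s i) | i <- iota 1 r]).
Proof. exact: (@dns_H_legs _ X Some (@Some_inj _) (fun _ _ => erefl)). Qed.

Lemma dns_ext_pivots_legs p : (forall k, 1 <= k < r -> N (s k) = false) ->
  is_DNS X setT p -> all pivot_or_H p ->
  is_DNS X setT (p ++ [seq Some (c i) | i <- iota 1 r.-1] ++ [seq Some (s i) | i <- iota 1 r.-1]).
Proof.
move=> N_s Dp /allP p_pivot_or_H; have rr := r_index.
apply: (dns_cat_legs (@Some_inj _) (fun _ _ => erefl)) => // [|k y kr /p_pivot_or_H].
  by rewrite leq_pred.
have ir : 1 <= k <= r by lia.
case/orP=> [/pivotsP[]|/imsetP[h hH]] ->; rewrite ?Some_in_cnbh ?in_cnbh_None.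
- by rewrite (inj_eq (@Some_inj _)) s_eq ?s_eq_c ?adj_ss //; apply/eqP; lia.
- by rewrite (inj_eq (@Some_inj _)) s_eq_c ?c_eq ?adj_cs //=; apply/eqP; lia.
- by rewrite N_s //; lia.
- by rewrite (inj_eq (@Some_inj _)) s_eq_H ?adj_Hs ?H_eq_c.
Qed.

Hypothesis N_module : forall h h', h \in H -> h' \in H -> N h -> N h'.

Let outside := [seq Some (s i) | i <- iota 1 r] ++ [seq Some (c i) | i <- iota 1 r] ++ [:: None].

Lemma ext_module y h h' : y \notin Some @: H -> h \in H -> h' \in H ->
  X y (Some h) -> X y (Some h').
Proof.
case: y => [x|] /=; last by move=> _; apply: N_module.
by rewrite mem_Some_imset; apply: spider_H_module.
Qed.

Lemma outside_cover y : y \notin Some @: H -> y \in outside.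
Proof.
case: y => [x|]; last by rewrite !mem_cat mem_head !orbT.
rewrite mem_Some_imset !mem_cat.
case: (spider_vertexP x) => [i ir|i ir|h ->] // _.
  by rewrite map_f ?mem_iota.
by rewrite orbC map_f ?mem_iota.
Qed.

Lemma size_outside : size outside = 2 * r + 1.
Proof. by rewrite !size_cat !size_map size_iota addnA addnn mul2n. Qed.

Lemma ext_size t : is_DNS X setT t -> size t <= 2 * r + 1 + gamma adj H.
Proof.
move=> D; rewrite -size_outside.
exact: (dns_size_module (@Some_inj _) ext_sym (fun _ _ => erefl) ext_module outside_cover).
Qed.

Lemma ext_size_miss t x : is_DNS X setT t -> x \notin Some @: H -> x \notin t ->
  size t <= 2 * r + gamma adj H.
Proof.
move=> D xH xt.
have := dns_size_module_miss (@Some_inj _) ext_sym (fun _ _ => erefl) ext_module outside_cover D xH xt.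
by rewrite size_outside addn1 addSn ltnS.
Qed.

Definition covered_once_by_H (t : seq (option T)) u :=
  {in t &, forall y1 y2, y1 \in Some @: H -> y2 \in Some @: H ->
     u \in cnbh X setT y1 -> u \in cnbh X setT y2 -> y1 = y2}.

Lemma ext_size_extend t x w : is_DNS X setT t -> x \in H -> Some x \notin t ->
  w \in cnbh adj H x -> covered_once_by_H t (Some w) -> size t <= 2 * r + gamma adj H.
Proof.
move=> D xH xt wx wt.
have := dns_size_module_extend (@Some_inj _) ext_sym (fun _ _ => erefl) ext_module
  outside_cover D xH xt wx.
rewrite size_outside addn1 addSn ltnS; apply; apply/count_le1P; first exact: dns_uniq D.
by move=> y1 y2 y1t y2t /andP[? ?] /andP[? ?]; apply: wt.
Qed.

Lemma ext_size_extend_nbr t w : (forall v, v \in H -> exists2 x, x \in H & adj v x) ->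
  is_DNS X setT t -> w \in H -> covered_once_by_H t (Some w) ->
  size t <= 2 * r + gamma adj H.
Proof.
move=> nbr D wH w_once.
have [wt|wt] := boolP (Some w \in t); last first.
  have w_w : w \in cnbh adj H w by rewrite inE wH eqxx.
  exact: ext_size_extend D wH wt w_w w_once.
have [x xH wx] := nbr w wH.
have w_x : w \in cnbh adj H x by rewrite inE wH adj_sym wx orbT.
apply: (ext_size_extend D xH _ w_x w_once).
apply/negP => xt; have := w_once _ _ xt wt; rewrite !mem_Some_imset !Some_in_cnbh xH wH eqxx.
by rewrite adj_sym wx orbT => /(_ isT isT isT isT) [xw]; move: wx; rewrite xw adj_irr.
Qed.

Lemma pivots_last_witness t : is_DNS X setT t -> {subset pivots <= t} ->
  exists z u, [/\ z \in t, pivot_or_H z, u \in cnbh X setT z &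
    forall y1 y2, y1 \in t -> y2 \in t -> pivot_or_H y1 -> pivot_or_H y2 ->
      y1 != z -> y2 != z -> u \in cnbh X setT y1 -> u \in cnbh X setT y2 -> y1 = y2].
Proof.
move=> D pivots_t.
have sr_p : Some (s r) \in pivots := mem_head _ _.
have : has pivot_or_H t.
  by apply/hasP; exists (Some (s r)); rewrite ?(pivots_t _ sr_p) // /pivot_or_H sr_p.
case/(dns_last_witness D) => z [u [zt Az uz u_once]]; exists z, u; split=> // y1 y2.
by move=> y1t y2t Ay1 Ay2 y1z y2z; apply: u_once; rewrite inE; apply/and3P.
Qed.

Lemma pivots_not_all_cover (t : seq (option T)) z u :
  (forall y1 y2, y1 \in t -> y2 \in t -> pivot_or_H y1 -> pivot_or_H y2 ->
      y1 != z -> y2 != z -> u \in cnbh X setT y1 -> u \in cnbh X setT y2 -> y1 = y2) ->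
  {subset pivots <= t} -> ~ {in pivots, forall w, u \in cnbh X setT w}.
Proof.
move=> u_once pivots_t all_cover; have [w1 [w2 [p1 p2 w12 z1 z2]]] := pivots_others z.
by move: w12; rewrite (u_once w1 w2) ?eqxx ?pivots_t ?all_cover // /pivot_or_H ?p1 ?p2.
Qed.

Lemma gamma_ext_leq : gamma X setT <= 2 * r + 1 + gamma adj H.
Proof. exact/gamma_leq/ext_size. Qed.

Lemma gamma_ext_leq_pivots :
  (forall t, is_DNS X setT t -> {subset pivots <= t} -> size t <= 2 * r + gamma adj H) ->
  gamma X setT <= 2 * r + gamma adj H.
Proof.
move=> pivots_bound; apply: gamma_leq => t D.
have [/allP pivots_t|/allPn[w /pivots_outside wH wt]] := boolP (all (mem t) pivots).
  exact: pivots_bound.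
exact: ext_size_miss D wH wt.
Qed.

End Extension.

Lemma MDNS_false_twin_sr TH : is_MDNS adj H TH ->
  is_MDNS (add_false_twin adj (s r)) setT ([seq Some x | x <- TH] ++
     [seq Some (c i) | i <- iota 1 r] ++ [seq Some (s i) | i <- iota 1 r] ++ [:: None]).
Proof.
case=> D gH; have rr := r_index; have /and3P[_ /allP TH_H _] := D.
have base := dns_ext_legs (adj (s r)) D.
have -> : forall p q w : seq (option T), p ++ q ++ w ++ [:: None] = rcons (p ++ q ++ w) None.
  by move=> p q w; rewrite -cats1 -!catA.
apply: MDNS_gamma_leq.
  apply: (dns_rcons base _ (in_setT _)).
    by rewrite !mem_cat; apply/negP => /or3P[] /mapP[].
  apply: (dns_next_of_witness (u := None) (y0 := Some (c r))) (dns_uniq base) _ _.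
    by rewrite in_cnbhT.
  move=> y; rewrite !mem_cat => /or3P[] /mapP[x]; rewrite ?mem_iota => xP ->;
    rewrite None_in_cnbh.
  - by rewrite adj_sH ?TH_H.
  - have xr : 1 <= x <= r by lia.
    by rewrite adj_sc // => /eqP<-.
  - have xr : 1 <= x <= r by lia.
    by rewrite adj_ss.
have module h h' : h \in H -> h' \in H -> adj (s r) h -> adj (s r) h' by move=> hH; rewrite adj_sH.
apply: leq_trans (gamma_ext_leq module) _.
by rewrite size_rcons !size_cat !size_map size_iota gH mul2n -addnn addn1 addSn addnC.
Qed.

Definition twin_cr_nbh (N : pred T) :=
  [/\ forall j, 1 <= j <= r -> N (s j) = (j == r),
      forall j, 1 <= j <= r -> j != r -> N (c j)
    & forall h, h \in H -> N h].

Lemma twin_cr_nbh_false : twin_cr_nbh (adj (c r)).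
Proof.
have rr := r_index.
by split=> [j jr|j jr jr'|h hH]; rewrite ?adj_cs ?adj_cc ?adj_cH // eq_sym.
Qed.

Lemma twin_cr_nbh_true : twin_cr_nbh (fun b => (b == c r) || adj (c r) b).
Proof.
have rr := r_index.
by split=> [j jr|j jr jr'|h hH] /=; rewrite ?s_eq_c ?adj_cs ?adj_cc ?adj_cH ?orbT // (eq_sym r) jr' orbT.
Qed.

Section TwinC.
Variable N : pred T.
Local Notation X := (ext_adj adj N).
Hypothesis N_nbh : twin_cr_nbh N.

Let N_s j : 1 <= j <= r -> N (s j) = (j == r).
Proof. by case: N_nbh => N_s _ _; apply: N_s. Qed.
Let N_c j : 1 <= j <= r -> j != r -> N (c j).
Proof. by case: N_nbh => _ N_c _; apply: N_c. Qed.
Let N_H h : h \in H -> N h.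
Proof. by case: N_nbh => _ _; apply. Qed.

Lemma twin_cr_module h h' : h \in H -> h' \in H -> N h -> N h'.
Proof. by move=> _ /N_H. Qed.

Lemma twin_cr_cover2 u : (forall i, 1 <= i <= r -> i != r -> u != Some (s i)) ->
  exists w1 w2, [/\ w1 \in pivots, w2 \in pivots, w1 != w2,
                    u \in cnbh X setT w1 & u \in cnbh X setT w2].
Proof.
have rr := r_index; have sc : Some (s r) != Some (c r).
  by rewrite (inj_eq (@Some_inj _)) s_eq_c.
case: u => [x|] u_s; last first.
  exists (Some (s r)), None.
  by split; rewrite ?None_in_cnbh ?inE ?eqxx ?orbT ?N_s.
case: (spider_vertexP x) u_s => [i ir|j jr|h hH] u_s.
- have -> : i = r.
    by apply/eqP/negPn/negP => ir'; have /negP[] := u_s i ir ir'.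
  exists (Some (s r)), (Some (c r)).
  by split; rewrite ?Some_in_cnbh ?inE ?eqxx ?adj_cs ?eqxx ?orbT.
- case: (eqVneq j r) => [->|jr'].
    exists (Some (s r)), (Some (c r)).
    by split; rewrite ?Some_in_cnbh ?inE ?eqxx ?adj_sc ?eqxx ?orbT.
  exists (Some (c r)), None.
  by split; rewrite ?Some_in_cnbh ?in_cnbh_None ?inE ?eqxx ?orbT ?N_c // adj_cc // (eq_sym r) jr' orbT.
- exists (Some (c r)), None.
  by split; rewrite ?Some_in_cnbh ?in_cnbh_None ?inE ?eqxx ?orbT ?N_H // adj_cH ?orbT.
Qed.

Lemma twin_cr_witness t : is_DNS X setT t -> {subset pivots <= t} ->
  exists u, [/\ forall i, 1 <= i <= r -> u != Some (s i) &
    forall h, h \in H -> Some h \in t -> u \notin cnbh X setT (Some h)].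
Proof.
(* Every vertex other than s_1, ..., s_(r-1) lies in the closed neighbourhoods of two pivots,
   so the last pivot-or-H vertex z is a pivot and its witness avoids the H-part. *)
move=> D pivots_t; have [z [u [zt Az uz u_once]]] := pivots_last_witness D pivots_t.
have u_s i : 1 <= i <= r -> i != r -> u != Some (s i).
  move=> ir ir'; apply: contraTneq uz => ->.
  case/orP: Az => [|/imsetP[h hH ->]]; last by rewrite Some_in_cnbh s_eq_H ?adj_Hs.
  case/pivotsP=> ->; rewrite ?Some_in_cnbh ?in_cnbh_None.
  - by rewrite s_eq ?adj_ss ?(negPf ir').
  - by rewrite s_eq_c ?adj_cs ?(negPf ir').
  - by rewrite N_s ?(negPf ir').
have [w1 [w2 [w1p w2p w12 uw1 uw2]]] := twin_cr_cover2 u_s.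
have pivot_or_H_p w : w \in pivots -> pivot_or_H w by rewrite /pivot_or_H => ->.
have z_pivot : z \in pivots.
  apply: contraTT w12 => zp; apply/negPn/eqP; apply: u_once; rewrite ?pivots_t ?pivot_or_H_p //;
    by apply: contraNneq zp => <-.
have [w' [w'p w'z uw']] : exists w', [/\ w' \in pivots, w' != z & u \in cnbh X setT w'].
  by case: (eqVneq w1 z) => [w1z|]; [exists w2; rewrite -w1z eq_sym | exists w1].
exists u; split=> [i ir | h hH ht].
  case: (eqVneq i r) => [->|]; last exact: u_s.
  apply/eqP => usr; apply: pivots_not_all_cover u_once pivots_t _ => w.
  by rewrite usr; case/pivotsP=> ->; rewrite ?Some_in_cnbh ?in_cnbh_None ?eqxx ?adj_cs ?eqxx ?orbT ?N_s.
apply/negP => uh; have /negP[] := pivots_outside w'p.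
have hz : Some h != z.
  by apply: contraTneq z_pivot => <-; apply: contraL hH => /pivots_outside; rewrite mem_Some_imset.
have Ah : pivot_or_H (Some h) by rewrite /pivot_or_H mem_Some_imset hH orbT.
have hw' := u_once _ _ ht (pivots_t _ w'p) Ah (pivot_or_H_p _ w'p) hz w'z uh uw'.
by rewrite -hw' mem_Some_imset.
Qed.

Lemma twin_cr_free_vertex t : H != set0 -> is_DNS X setT t -> {subset pivots <= t} ->
  exists2 h, h \in H & forall y, y \in t -> y \in Some @: H -> Some h \notin cnbh X setT y.
Proof.
move=> /set0Pn[h0 h0H] D pivots_t; have [u [u_s noH]] := twin_cr_witness D pivots_t.
have H_free : (forall h, h \in H -> u \in cnbh X setT (Some h)) ->
    exists2 h, h \in H & forall y, y \in t -> y \in Some @: H -> Some h \notin cnbh X setT y.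
  move=> H_u; exists h0 => // y yt /imsetP[h hH yE]; subst y.
  by case/negP: (noH h hH yt); apply: H_u.
case: u u_s noH H_free => [x|] u_s noH H_free; last first.
  by apply: H_free => h hH; rewrite None_in_cnbh N_H.
case: (spider_vertexP x) u_s noH H_free => [i ir|j jr|h hH] u_s noH H_free.
- by case/eqP: (u_s i ir).
- by apply: H_free => h hH; rewrite Some_in_cnbh adj_Hc ?orbT.
- by exists h => // y yt /imsetP[h' h'H yE]; subst y; apply: noH.
Qed.

Lemma gamma_twin_cr : H != set0 -> gamma X setT <= 2 * r + gamma adj H.
Proof.
move=> Hne; apply: (gamma_ext_leq_pivots twin_cr_module) => t D pivots_t.
have [h hH free] := twin_cr_free_vertex Hne D pivots_t.
have ht : Some h \notin t.
  by apply/negP => /free; rewrite mem_Some_imset Some_in_cnbh eqxx => /(_ hH).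
have hh : h \in cnbh adj H h by rewrite inE hH eqxx.
apply: (ext_size_extend twin_cr_module D hH ht hh) => y1 y2 y1t _ y1H _.
by move/negP: (free _ y1t y1H).
Qed.

Lemma MDNS_twin_cr_H0 : H == set0 ->
  is_MDNS X setT ([:: Some (s r); Some (c r); None] ++
    [seq Some (c i) | i <- iota 1 r.-1] ++ [seq Some (s i) | i <- iota 1 r.-1]).
Proof.
move=> /eqP H0; have rr := r_index; have r1 : 1 <= 1 <= r by rewrite leqnn ltnW.
have D1 : is_DNS X setT [:: Some (s r)].
  by apply: (@dns_rcons _ _ _ [::]); rewrite ?dns_next_size1 ?in_setT.
have D2 : is_DNS X setT [:: Some (s r); Some (c r)].
  apply: (dns_rcons D1); rewrite ?dns_next_size1 ?in_setT //.
  by rewrite inE (inj_eq (@Some_inj _)) c_eq_s.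
have D3 : is_DNS X setT [:: Some (s r); Some (c r); None].
  apply: (dns_rcons D2) => //; first by rewrite in_setT.
  apply: (dns_next_of_witness (u := Some (c 1)) (y0 := Some (c r))) (dns_uniq D2) _ _.
  - by rewrite in_cnbh_None N_c //; apply/eqP; lia.
  - by move=> y; rewrite !in_cons in_nil orbF => /orP[]/eqP-> //; rewrite Some_in_cnbh c_eq_s ?adj_sc //; lia.
apply: MDNS_gamma_leq.
  apply: dns_ext_pivots_legs D3 _; last by rewrite /= /pivot_or_H !inE !eqxx !orbT.
  by move=> k kr; rewrite N_s //; [apply/eqP | ]; lia.
apply: leq_trans (gamma_ext_leq twin_cr_module) _.
by rewrite H0 gamma_set0 ?size_cat ?size_map ?size_iota /=; lia.
Qed.

Lemma MDNS_twin_cr TH : H != set0 -> is_MDNS adj H TH ->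
  is_MDNS X setT
    ([seq Some x | x <- TH] ++ [seq Some (c i) | i <- iota 1 r] ++ [seq Some (s i) | i <- iota 1 r]).
Proof.
move=> Hne [D gH]; apply: MDNS_gamma_leq; first exact: dns_ext_legs.
apply: leq_trans (gamma_twin_cr Hne) _.
by rewrite !size_cat !size_map size_iota gH mul2n -addnn addnC.
Qed.

End TwinC.

Section TrueTwinS.
Local Notation N := (fun b => (b == s r) || adj (s r) b).
Local Notation X := (ext_adj adj N).

Lemma true_twin_sr_N_H h : h \in H -> N h = false.
Proof. by move=> hH; rewrite /= H_eq_s ?adj_sH ?r_index. Qed.

Lemma true_twin_sr_module h h' : h \in H -> h' \in H -> N h -> N h'.
Proof. by move=> /true_twin_sr_N_H->. Qed.

Lemma true_twin_sr_pivots_clique w w' : w \in pivots -> w' \in pivots -> w \in cnbh X setT w'.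
Proof.
have rr := r_index.
by do 2![case/pivotsP=> ->]; rewrite ?Some_in_cnbh ?None_in_cnbh ?in_cnbh_None ?in_cnbhT ?eqxx
  ?adj_sc ?adj_cs ?eqxx ?orbT.
Qed.

Lemma true_twin_sr_cnbh_pivot w u : w = Some (s r) \/ w = None -> u \in cnbh X setT w ->
  u \in pivots.
Proof.
have rr := r_index; have N_pivot x : N x -> Some x \in pivots.
  case: (spider_vertexP x) => [i ir|j jr|h hH] /=.
  - by rewrite s_eq ?adj_ss // orbF => /eqP->; rewrite mem_head.
  - by rewrite c_eq_s ?adj_sc // => /eqP<-; rewrite !inE eqxx orbT.
  - by rewrite H_eq_s ?adj_sH.
case: u => [x|]; last by rewrite !inE eqxx !orbT.
by case=> ->; rewrite ?Some_in_cnbh ?in_cnbh_None; apply: N_pivot.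
Qed.

Lemma true_twin_sr_cnbh_H h u : h \in H -> u \in cnbh X setT (Some h) ->
  u \in cnbh X setT (Some (c r)).
Proof.
have rr := r_index; move=> hH; case: u => [x|]; last by rewrite None_in_cnbh true_twin_sr_N_H.
rewrite !Some_in_cnbh => /orP[/eqP->|]; first by rewrite adj_cH ?orbT.
case: (spider_vertexP x) => [i ir|j jr|h' h'H]; first by rewrite adj_Hs.
  by rewrite c_eq ?adj_cc // eq_sym; case: eqP.
by rewrite adj_cH ?orbT.
Qed.

Lemma true_twin_sr_witness t : is_DNS X setT t -> {subset pivots <= t} ->
  exists u, [/\ u \in cnbh X setT (Some (c r)), u \notin pivots & covered_once_by_H N t u].
Proof.
(* The pivots form a triangle and N[s_r] = N[v'] = pivots, so the last pivot-or-H vertex is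
   c_r or lies in H, and c_r, which precedes it or is it, covers its witness. *)
move=> D pivots_t; have [z [u [zt Az uz u_once]]] := pivots_last_witness D pivots_t.
have u_np : u \notin pivots.
  apply/negP => up; apply: pivots_not_all_cover u_once pivots_t _ => w wp.
  exact: true_twin_sr_pivots_clique.
have cr_p : Some (c r) \in pivots by rewrite !inE eqxx orbT.
have z_cr_H : z = Some (c r) \/ z \in Some @: H.
  case/orP: Az => [|]; last by right.
  case/pivotsP=> zE; [|by left|].
    by rewrite (true_twin_sr_cnbh_pivot (or_introl zE) uz) in u_np.
  by rewrite (true_twin_sr_cnbh_pivot (or_intror zE) uz) in u_np.
have u_cr : u \in cnbh X setT (Some (c r)).
  by case: z_cr_H uz => [->|/imsetP[h hH ->]] //; apply: true_twin_sr_cnbh_H.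
have pivot_or_H_cr : pivot_or_H (Some (c r)) by rewrite /pivot_or_H cr_p.
have pivot_or_H_H y : y \in Some @: H -> pivot_or_H y by rewrite /pivot_or_H orbC => ->.
have H_neq_cr y : y \in Some @: H -> y != Some (c r).
  by move=> yH; apply: contraTneq yH => ->; apply: pivots_outside.
exists u; split=> // y1 y2 y1t y2t y1H y2H uy1 uy2.
case: z_cr_H => [zE|zH].
  by apply: (u_once _ _ y1t y2t (pivot_or_H_H _ y1H) (pivot_or_H_H _ y2H)); rewrite // zE H_neq_cr.
have cr_z : Some (c r) != z by apply: contraTneq zH => <-; apply: pivots_outside.
suff H_z y : y \in t -> y \in Some @: H -> u \in cnbh X setT y -> y = z.
  by rewrite (H_z y1) // (H_z y2).
move=> yt yH uy; apply/eqP/negPn/negP => yz; have /negP[] := H_neq_cr y yH.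
by rewrite (u_once y (Some (c r)) yt (pivots_t _ cr_p) (pivot_or_H_H _ yH) pivot_or_H_cr).
Qed.

Lemma true_twin_sr_free_vertex t u : H != set0 -> u \in cnbh X setT (Some (c r)) ->
  u \notin pivots -> covered_once_by_H N t u ->
  exists2 w, w \in H & covered_once_by_H N t (Some w).
Proof.
move=> /set0Pn[h0 h0H] u_cr u_np u_once; have rr := r_index.
case: u u_cr u_np u_once => [x|] u_cr u_np u_once; last first.
  by case/negP: u_np; apply/pivotsP; constructor 3.
case: (spider_vertexP x) u_cr u_np u_once => [i ir|j jr|h hH] u_cr u_np u_once.
- move: u_cr; rewrite Some_in_cnbh s_eq_c // adj_cs // => /eqP ri; subst i.
  by rewrite mem_head in u_np.
- have cj y : y \in Some @: H -> Some (c j) \in cnbh X setT y.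
    by case/imsetP=> h hH ->; rewrite Some_in_cnbh adj_Hc ?orbT.
  by exists h0 => // y1 y2 y1t y2t y1H y2H _ _; apply: u_once; rewrite ?cj.
- by exists h.
Qed.

Lemma gamma_true_twin_sr : H != set0 -> ~~ has_isolated adj H ->
  gamma X setT <= 2 * r + gamma adj H.
Proof.
move=> Hne no_iso; apply: (gamma_ext_leq_pivots true_twin_sr_module) => t D pivots_t.
have [u [u_cr u_np u_once]] := true_twin_sr_witness D pivots_t.
have [w wH w_once] := true_twin_sr_free_vertex Hne u_cr u_np u_once.
apply: (ext_size_extend_nbr true_twin_sr_module _ D wH w_once) => v vH.
move/existsPn: no_iso => /(_ v); rewrite vH /= => /forall_inPn[x xH].
by rewrite negbK; exists x.
Qed.

Lemma dns_true_twin_sr_prefix TH : is_DNS adj H TH ->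
  is_DNS X setT (rcons (rcons [seq Some x | x <- TH] (Some (s r))) None).
Proof.
move=> D; have rr := r_index; have TH_H := dns_Some_H D.
have D0 := dns_embed (e := X) (@Some_inj _) (fun _ _ => erefl) D.
have D1 : is_DNS X setT (rcons [seq Some x | x <- TH] (Some (s r))).
  apply: (dns_rcons D0); rewrite ?in_setT //.
    by apply/negP => /TH_H; rewrite mem_Some_imset s_notin_H.
  apply: (dns_next_of_witness (u := Some (s r)) (y0 := Some (s r))) (dns_uniq D0) _ _.
    by rewrite Some_in_cnbh eqxx.
  by move=> y /TH_H /imsetP[h hH ->]; rewrite Some_in_cnbh s_eq_H ?adj_Hs.
apply: (dns_rcons D1); rewrite ?in_setT //.
  by rewrite mem_rcons in_cons; apply/negP => /TH_H; apply/negP/None_notin_imset.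
apply: (dns_next_of_witness (u := None) (y0 := Some (s r))) (dns_uniq D1) _ _.
  by rewrite in_cnbhT.
move=> y; rewrite mem_rcons in_cons => /orP[/eqP-> // | /TH_H /imsetP[h hH ->]].
by rewrite None_in_cnbh true_twin_sr_N_H.
Qed.

Lemma dns_true_twin_sr_isolated TH : (H == set0) || has_isolated adj H -> is_DNS adj H TH ->
  is_DNS X setT (rcons (rcons (rcons [seq Some x | x <- TH] (Some (s r))) None) (Some (c r))).
Proof.
move=> iso D; have rr := r_index; have TH_H := dns_Some_H D.
have D2 := dns_true_twin_sr_prefix D.
have prefix y : y \in rcons (rcons [seq Some x | x <- TH] (Some (s r))) None ->
    [\/ y = None, y = Some (s r) | y \in Some @: H].
  rewrite mem_rcons in_cons mem_rcons in_cons => /or3P[/eqP|/eqP|/TH_H];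
    by [constructor 1 | constructor 2 | constructor 3].
apply: (dns_rcons D2); rewrite ?in_setT //.
  apply/negP => /prefix[// | [/eqP] |]; first by rewrite c_eq_s.
  by rewrite mem_Some_imset c_notin_H.
case/orP: iso => [/eqP H0 | /exists_inP[h0 h0H /forall_inP h0_iso]].
  have r1 : 1 <= 1 <= r by rewrite leqnn ltnW.
  apply: (dns_next_of_witness (u := Some (c 1)) (y0 := Some (c 1))) (dns_uniq D2) _ _.
    by rewrite Some_in_cnbh adj_cc // (gtn_eqF r_gt1) orbT.
  move=> y /prefix[->|->|]; last by rewrite H0 imset0 inE.
    by rewrite in_cnbh_None /= c_eq_s ?adj_sc // (gtn_eqF r_gt1).
  by rewrite Some_in_cnbh c_eq_s ?adj_sc // (gtn_eqF r_gt1).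
apply: (dns_next_of_witness (u := Some h0) (y0 := Some h0)) (dns_uniq D2) _ _.
  by rewrite Some_in_cnbh adj_cH ?orbT.
move=> y /prefix[->|->|/imsetP[h hH ->]].
- by rewrite in_cnbh_None /= H_eq_s ?adj_sH.
- by rewrite Some_in_cnbh H_eq_s ?adj_sH.
- by rewrite Some_in_cnbh adj_sym (negPf (h0_iso _ hH)) orbF => /eqP->.
Qed.

Lemma MDNS_true_twin_sr_isolated TH : (H == set0) || has_isolated adj H -> is_MDNS adj H TH ->
  is_MDNS (add_true_twin adj (s r)) setT ([seq Some x | x <- TH] ++
    [:: Some (s r); None; Some (c r)] ++
    [seq Some (c i) | i <- iota 1 r.-1] ++ [seq Some (s i) | i <- iota 1 r.-1]).
Proof.
move=> iso [D gH]; have rr := r_index; have TH_H := dns_Some_H D.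
rewrite catA; have -> : [seq Some x | x <- TH] ++ [:: Some (s r); None; Some (c r)] =
    rcons (rcons (rcons [seq Some x | x <- TH] (Some (s r))) None) (Some (c r)).
  by rewrite -!cats1 -!catA.
apply: MDNS_gamma_leq.
  apply: dns_ext_pivots_legs (dns_true_twin_sr_isolated iso D) _.
    by move=> k kr; rewrite /= s_eq ?adj_ss //; try lia; apply/eqP; lia.
  rewrite !all_rcons {1 2 3}/pivot_or_H /pivots !inE !eqxx !orbT /=.
  by apply/allP => y /TH_H; rewrite /pivot_or_H => ->; rewrite orbT.
apply: leq_trans (gamma_ext_leq true_twin_sr_module) _.
by rewrite !size_cat !size_rcons !size_map size_iota gH; lia.
Qed.

Lemma MDNS_true_twin_sr TH : H != set0 -> ~~ has_isolated adj H -> is_MDNS adj H TH ->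
  is_MDNS (add_true_twin adj (s r)) setT
    ([seq Some x | x <- TH] ++ [seq Some (c i) | i <- iota 1 r] ++ [seq Some (s i) | i <- iota 1 r]).
Proof.
move=> Hne no_iso [D gH]; apply: MDNS_gamma_leq; first exact: dns_ext_legs.
apply: leq_trans (gamma_true_twin_sr Hne no_iso) _.
by rewrite !size_cat !size_map size_iota gH mul2n -addnn addnC.
Qed.

End TrueTwinS.

End ThinSpider.

Theorem proposition9 (T : finType) (adj : rel T) (r : nat) (s c : nat -> T)
    (H : {set T}) (TH : seq T) :
  symmetric adj -> irreflexive adj ->
  thin_spider adj r s c H ->
  is_MDNS adj H TH ->
  let Sf := add_false_twin adj (s r) in
  let St := add_true_twin adj (s r) in
  let Cf := add_false_twin adj (c r) in
  let Ct := add_true_twin adj (c r) in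
  let cs k := [seq Some (c i) | i <- iota 1 k] in
  let ss k := [seq Some (s i) | i <- iota 1 k] in
  let TH' := [seq Some x | x <- TH] in
  [/\
   (* (1) *)
   [/\ gamma Sf setT = gamma adj setT + 1,
       gamma adj setT + 1 = 2 * r + 1 + gamma adj H
     & is_MDNS Sf setT (TH' ++ cs r ++ ss r ++ [:: None])],
   (* (2) *)
   (H == set0) || has_isolated adj H ->
   [/\ gamma St setT = gamma adj setT + 1,
       gamma adj setT + 1 = 2 * r + 1 + gamma adj H
     & is_MDNS St setT
         (TH' ++ [:: Some (s r); None; Some (c r)] ++ cs r.-1 ++ ss r.-1)],
   (* (3) *)
   H != set0 -> ~~ has_isolated adj H ->
   gamma St setT = 2 * r + gamma adj H /\
   is_MDNS St setT (TH' ++ cs r ++ ss r),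
   (* (4) *)
   H == set0 ->
   [/\ gamma Cf setT = gamma Ct setT,
       gamma Ct setT = gamma adj setT + 1,
       gamma adj setT + 1 = 2 * r + 1,
       is_MDNS Cf setT ([:: Some (s r); Some (c r); None] ++ cs r.-1 ++ ss r.-1)
     & is_MDNS Ct setT ([:: Some (s r); Some (c r); None] ++ cs r.-1 ++ ss r.-1)]
   &
   (* (5) *)
   H != set0 ->
   [/\ gamma Cf setT = gamma Ct setT,
       gamma Ct setT = 2 * r + gamma adj H,
       is_MDNS Cf setT (TH' ++ cs r ++ ss r)
     & is_MDNS Ct setT (TH' ++ cs r ++ ss r)]].

Proof.
move=> adj_sym adj_irr spider MD; cbv zeta.
have gG := gamma_spider adj_sym spider MD; have [_ gH] := MD.
have r1 : 0 < r by case: spider => -[/ltnW].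
split.
- have M := MDNS_false_twin_sr adj_sym spider MD; case: (M) => _ <-.
  by split=> //; rewrite ?gG -?gH ?size_cat ?size_map ?size_iota /=; lia.
- move=> iso; have M := MDNS_true_twin_sr_isolated adj_sym adj_irr spider iso MD; case: (M) => _ <-.
  by split=> //; rewrite ?gG -?gH ?size_cat ?size_map ?size_iota /=; lia.
- move=> Hne no_iso; have M := MDNS_true_twin_sr adj_sym adj_irr spider Hne no_iso MD.
  by case: (M) => _ <-; split=> //; rewrite -?gH ?size_cat ?size_map ?size_iota /=; lia.
- move=> H0; rewrite (eqP H0) gamma_set0 in gH.
  have Mf := MDNS_twin_cr_H0 adj_sym spider (twin_cr_nbh_false adj_sym adj_irr spider) H0.
  have Mt := MDNS_twin_cr_H0 adj_sym spider (twin_cr_nbh_true adj_sym adj_irr spider) H0.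
  case: (Mf) => _ <-; case: (Mt) => _ <-.
  by split=> //; rewrite ?gG -?gH ?size_cat ?size_map ?size_iota /=; lia.
- move=> Hne; have Mf := MDNS_twin_cr adj_sym adj_irr spider
    (twin_cr_nbh_false adj_sym adj_irr spider) Hne MD.
  have Mt := MDNS_twin_cr adj_sym adj_irr spider
    (twin_cr_nbh_true adj_sym adj_irr spider) Hne MD.
  case: (Mf) => _ <-; case: (Mt) => _ <-.
  by split=> //; rewrite -?gH ?size_cat ?size_map ?size_iota /=; lia.
Qed.
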